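(* Let $(R,1_R)$ be an Archimedean unital Riesz space and $M$ a pseudo MV-algebra. If $s_1,s_2$ are $(R,1_R)$-state-morphisms on $M$ whose kernels are maximal ideals of $M$ and $\mathrm{Ker}(s_1)=\mathrm{Ker}(s_2)$, then $s_1=s_2$.
   Context: Pseudo MV-algebra: an algebra $(M;\oplus,{}^-,{}^\sim,0,1)$, $0\neq1$, satisfying the standard pseudo MV-algebra axioms; equivalently (up to isomorphism) $M=\Gamma(G,u)=[0,u]$ for a unital $\ell$-group $(G,u)$ with $x\oplus y=(x+y)\wedge u$, $x^-=u-x$, $x^\sim=-x+u$. Ideal: nonempty down-set closed under $\oplus$; maximal = maximal among proper ideals. A unital Riesz space $(R,1_R)$ is a Riesz space with a fixed strong unit $1_R$; Archimedean if $na\le b$ for all $n\ge1$ implies $a\le0$. $\Gamma(R,1_R)$ is the MV-algebra on $[0,1_R]$. An $(R,1_R)$-state-morphism on $M$ is a homomorphism of pseudo MV-algebras $M\to\Gamma(R,1_R)$; its kernel is $\mathrm{Ker}(s)=\{x:s(x)=0\}$. *)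

From Stdlib Require Import Reals.
Open Scope R_scope.

Record PseudoMV := {
  pcar :> Type;
  poplus : pcar -> pcar -> pcar;
  pminus : pcar -> pcar;
  ptilde : pcar -> pcar;
  pzero : pcar;
  pone : pcar;
  pzero_neq_one : pzero <> pone;
  pA1 : forall x y z, poplus x (poplus y z) = poplus (poplus x y) z;
  pA2 : forall x, poplus x pzero = x /\ poplus pzero x = x;
  pA3 : forall x, poplus x pone = pone /\ poplus pone x = pone;
  pA4 : ptilde pone = pzero /\ pminus pone = pzero;
  pA5 : forall x y,
      ptilde (poplus (pminus x) (pminus y)) = pminus (poplus (ptilde x) (ptilde y));
  pA6 : forall x y,
      let odot := fun a b => ptilde (poplus (pminus a) (pminus b)) in
      poplus x (odot (ptilde x) y) = poplus y (odot (ptilde y) x) /\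
      poplus y (odot (ptilde y) x) = poplus (odot x (pminus y)) y /\
      poplus (odot x (pminus y)) y = poplus (odot y (pminus x)) x;
  pA7 : forall x y,
      let odot := fun a b => ptilde (poplus (pminus a) (pminus b)) in
      odot x (poplus (pminus x) y) = odot (poplus x (ptilde y)) y;
  pA8 : forall x, ptilde (pminus x) = x
}.

Definition ple (M : PseudoMV) (x y : M) : Prop := poplus M (pminus M x) y = pone M.

Definition is_ideal (M : PseudoMV) (I : M -> Prop) : Prop :=
  (exists x, I x) /\
  (forall x y, I y -> ple M x y -> I x) /\
  (forall x y, I x -> I y -> I (poplus M x y)).

Definition is_maximal_ideal (M : PseudoMV) (I : M -> Prop) : Prop :=
  is_ideal M I /\ (exists x, ~ I x) /\
  (forall J : M -> Prop, is_ideal M J -> (exists x, ~ J x) ->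
     (forall x, I x -> J x) -> forall x, J x -> I x).

Record RieszSpace := {
  rcar :> Type;
  radd : rcar -> rcar -> rcar;
  ropp : rcar -> rcar;
  rzero : rcar;
  rscal : R -> rcar -> rcar;
  rle : rcar -> rcar -> Prop;
  rmeet : rcar -> rcar -> rcar;
  rjoin : rcar -> rcar -> rcar;
  radd_assoc : forall x y z, radd x (radd y z) = radd (radd x y) z;
  radd_comm : forall x y, radd x y = radd y x;
  radd_0 : forall x, radd x rzero = x;
  radd_opp : forall x, radd x (ropp x) = rzero;
  rscal_assoc : forall a b x, rscal a (rscal b x) = rscal (a * b) x;
  rscal_1 : forall x, rscal 1 x = x;
  rscal_distr_r : forall a x y, rscal a (radd x y) = radd (rscal a x) (rscal a y);
  rscal_distr_l : forall a b x, rscal (a + b) x = radd (rscal a x) (rscal b x);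
  rle_refl : forall x, rle x x;
  rle_antisym : forall x y, rle x y -> rle y x -> x = y;
  rle_trans : forall x y z, rle x y -> rle y z -> rle x z;
  rle_add : forall x y z, rle x y -> rle (radd x z) (radd y z);
  rle_scal : forall a x, 0 <= a -> rle rzero x -> rle rzero (rscal a x);
  rmeet_glb : forall x y z, rle z (rmeet x y) <-> (rle z x /\ rle z y);
  rjoin_lub : forall x y z, rle (rjoin x y) z <-> (rle x z /\ rle y z)
}.

Definition rsub (V : RieszSpace) (x y : V) : V := radd V x (ropp V y).

Definition strong_unit (V : RieszSpace) (u : V) : Prop :=
  rle V (rzero V) u /\ forall x : V, exists n : nat, rle V x (rscal V (INR n) u).

Definition archimedean (V : RieszSpace) : Prop :=
  forall a b : V, (forall n : nat, (1 <= n)%nat -> rle V (rscal V (INR n) a) b) ->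
    rle V a (rzero V).

(* (R,1_R)-state-morphism: a pseudo MV-homomorphism M -> Gamma(R,1_R), where
   Gamma(R,1_R) = [0,1_R] with x (+) y = (x+y) /\ 1_R, x^- = x^~ = 1_R - x. *)
Definition state_morphism (M : PseudoMV) (V : RieszSpace) (u : V) (s : M -> V) : Prop :=
  (forall x, rle V (rzero V) (s x) /\ rle V (s x) u) /\
  (forall x y, s (poplus M x y) = rmeet V (radd V (s x) (s y)) u) /\
  (forall x, s (pminus M x) = rsub V u (s x)) /\
  (forall x, s (ptilde M x) = radd V (ropp V (s x)) u) /\
  s (pzero M) = rzero V /\
  s (pone M) = u.

Definition Ker (M : PseudoMV) (V : RieszSpace) (s : M -> V) : M -> Prop :=
  fun x => s x = rzero V.

(* The kernel of a state-morphism s determines the order it induces on M: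
   s (y ⊙ z^-) = s y - (s y ∧ s z) vanishes iff s y <= s z.  If Ker s is maximal,
   the ideal generated by Ker s and any y outside it is all of M, so u <= n s y;
   applied to y ⊙ z^- and z ⊙ y^-, whose images are disjoint, this makes the image
   of s a chain.  Hence for every x one of x ⊕ x, x ⊙ x has image 2 s x, resp.
   2 s x - u, under both s1 and s2, so d = s1 x - s2 x satisfies 2^k d <= u for all k,
   and d <= 0 because the space is Archimedean.  By symmetry s1 = s2. *)

From Stdlib Require Import Reals Lra Classical FunctionalExtensionality.
Open Scope R_scope.

Local Infix "⊞" := (radd _) (at level 50, left associativity).
Local Notation "⊟ x" := (ropp _ x) (at level 35, right associativity).
Local Infix "≼" := (rle _) (at level 70).
Local Infix "⊓" := (rmeet _) (at level 40, left associativity).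
Local Notation "t ⋅ x" := (rscal _ t x) (at level 40, left associativity).

Section RieszSpaceTheory.

Context {V : RieszSpace}.
Implicit Types a b c d u w x y z : V.

Lemma add0r x : rzero V ⊞ x = x.
Proof. rewrite radd_comm; apply radd_0. Qed.

Lemma addNr x : ⊟ x ⊞ x = rzero V.
Proof. rewrite radd_comm; apply radd_opp. Qed.

Lemma addrK x y : x ⊞ y ⊞ ⊟ y = x.
Proof. rewrite <- radd_assoc, radd_opp; apply radd_0. Qed.

Lemma addrNK x y : x ⊞ ⊟ y ⊞ y = x.
Proof. rewrite <- radd_assoc, addNr; apply radd_0. Qed.

Lemma addIr z x y : x ⊞ z = y ⊞ z -> x = y.
Proof. intro E. rewrite <- (addrK x z), E. apply addrK. Qed.

Lemma oppr_unique x y : x ⊞ y = rzero V -> y = ⊟ x.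
Proof. intro E. rewrite <- (add0r y), <- (addNr x), <- radd_assoc, E. apply radd_0. Qed.

Lemma opprK x : ⊟ ⊟ x = x.
Proof. symmetry. apply oppr_unique, addNr. Qed.

Lemma addrACA a b c d : (a ⊞ b) ⊞ (c ⊞ d) = (a ⊞ c) ⊞ (b ⊞ d).
Proof.
  rewrite !radd_assoc. f_equal. rewrite <- !radd_assoc. f_equal. apply radd_comm.
Qed.

Lemma opprD x y : ⊟ (x ⊞ y) = ⊟ x ⊞ ⊟ y.
Proof. symmetry. apply oppr_unique. rewrite addrACA, !radd_opp. apply radd_0. Qed.

Lemma opprB x y : ⊟ (x ⊞ ⊟ y) = y ⊞ ⊟ x.
Proof. rewrite opprD, opprK. apply radd_comm. Qed.

Lemma subKr x y : x ⊞ ⊟ (x ⊞ ⊟ y) = y.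
Proof. rewrite opprB, radd_assoc, (radd_comm _ x y). apply addrK. Qed.

Lemma subrDsubr x y z : x ⊞ ⊟ (z ⊞ (x ⊞ ⊟ y)) = y ⊞ ⊟ z.
Proof.
  rewrite opprD, opprB, (radd_comm _ (⊟ z)), radd_assoc, (radd_comm _ x), addrNK.
  reflexivity.
Qed.

Lemma subrBB x y w : (x ⊞ ⊟ w) ⊞ ⊟ (y ⊞ ⊟ w) = x ⊞ ⊟ y.
Proof. rewrite opprB, <- radd_assoc, (radd_assoc _ (⊟ w) w), addNr, add0r. reflexivity. Qed.

Lemma subrDD a b : (a ⊞ a) ⊞ ⊟ (b ⊞ b) = (a ⊞ ⊟ b) ⊞ (a ⊞ ⊟ b).
Proof. rewrite opprD. apply addrACA. Qed.

Lemma lerD2r z x y : x ⊞ z ≼ y ⊞ z <-> x ≼ y.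
Proof.
  split; intro H; [|apply rle_add; exact H].
  rewrite <- (addrK x z), <- (addrK y z). apply rle_add, H.
Qed.

Lemma lerD2l z x y : x ≼ y -> z ⊞ x ≼ z ⊞ y.
Proof. intro H. rewrite (radd_comm _ z x), (radd_comm _ z y). apply rle_add, H. Qed.

Lemma lerD a b c d : a ≼ b -> c ≼ d -> a ⊞ c ≼ b ⊞ d.
Proof. intros H1 H2. apply rle_trans with (b ⊞ c); [apply rle_add | apply lerD2l]; assumption. Qed.

Lemma subr_ge0 x y : rzero V ≼ y ⊞ ⊟ x <-> x ≼ y.
Proof. rewrite <- (lerD2r x), add0r, addrNK. reflexivity. Qed.

Lemma subr_le0 x y : x ⊞ ⊟ y ≼ rzero V <-> x ≼ y.
Proof. rewrite <- (lerD2r y), add0r, addrNK. reflexivity. Qed.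

Lemma oppr_le0 x : rzero V ≼ x -> ⊟ x ≼ rzero V.
Proof. intro H. apply (lerD2r x). rewrite addNr, add0r. exact H. Qed.

Lemma meet_le_l x y : x ⊓ y ≼ x.
Proof. apply (proj1 (rmeet_glb V x y (x ⊓ y)) (rle_refl V _)). Qed.

Lemma meet_le_r x y : x ⊓ y ≼ y.
Proof. apply (proj1 (rmeet_glb V x y (x ⊓ y)) (rle_refl V _)). Qed.

Lemma le_meet x y z : z ≼ x -> z ≼ y -> z ≼ x ⊓ y.
Proof. intros; apply rmeet_glb; split; assumption. Qed.

Lemma meet_idPl x y : x ≼ y -> x ⊓ y = x.
Proof. intro H. apply rle_antisym; [apply meet_le_l | apply le_meet, H; apply rle_refl]. Qed.

Lemma meetC x y : x ⊓ y = y ⊓ x.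
Proof. apply rle_antisym; apply le_meet; (apply meet_le_l || apply meet_le_r). Qed.

Lemma meetDl x y w : (x ⊞ w) ⊓ (y ⊞ w) = (x ⊓ y) ⊞ w.
Proof.
  apply rle_antisym.
  - apply (lerD2r (⊟ w)). rewrite addrK.
    apply le_meet; apply (lerD2r w); rewrite addrNK; (apply meet_le_l || apply meet_le_r).
  - apply le_meet; apply rle_add; (apply meet_le_l || apply meet_le_r).
Qed.

Lemma subr_meet_disjoint x y : (x ⊞ ⊟ (x ⊓ y)) ⊓ (y ⊞ ⊟ (x ⊓ y)) = rzero V.
Proof. rewrite meetDl. apply radd_opp. Qed.

Lemma subr_meet_eq0 x y : x ⊞ ⊟ (x ⊓ y) = rzero V <-> x ≼ y.
Proof.
  split; intro H.
  - rewrite <- (addrNK x (x ⊓ y)), H, add0r. apply meet_le_r.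
  - rewrite meet_idPl by exact H. apply radd_opp.
Qed.

Lemma scale0r x : 0 ⋅ x = rzero V.
Proof.
  apply (addIr (0 ⋅ x)). rewrite add0r, <- rscal_distr_l, Rplus_0_l. reflexivity.
Qed.

Lemma scaler0 t : t ⋅ rzero V = rzero V.
Proof.
  apply (addIr (t ⋅ rzero V)). rewrite add0r, <- rscal_distr_r, radd_0. reflexivity.
Qed.

Lemma scalerN t x : t ⋅ (⊟ x) = ⊟ (t ⋅ x).
Proof. apply oppr_unique. rewrite <- rscal_distr_r, radd_opp. apply scaler0. Qed.

Lemma scaler_double x : 2 ⋅ x = x ⊞ x.
Proof. replace 2 with (1 + 1) by lra. rewrite rscal_distr_l, rscal_1. reflexivity. Qed.

Lemma ler_scale t x y : 0 <= t -> x ≼ y -> t ⋅ x ≼ t ⋅ y.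
Proof.
  intros Ht H. apply subr_ge0. rewrite <- scalerN, <- rscal_distr_r.
  apply rle_scal; [exact Ht | apply subr_ge0, H].
Qed.

Lemma ler_scale_l x t1 t2 : rzero V ≼ x -> 0 <= t1 <= t2 -> t1 ⋅ x ≼ t2 ⋅ x.
Proof.
  intros Hx Ht. replace t2 with (t1 + (t2 - t1)) by lra. rewrite rscal_distr_l.
  rewrite <- (radd_0 _ (t1 ⋅ x)) at 1. apply lerD2l.
  rewrite <- (scaler0 (t2 - t1)). apply ler_scale; [lra | exact Hx].
Qed.

Lemma scale_meet_ge t x y : 0 < t -> (t ⋅ x) ⊓ (t ⋅ y) ≼ t ⋅ (x ⊓ y).
Proof.
  intro Ht. set (m := (t ⋅ x) ⊓ (t ⋅ y)).
  assert (Hinv : 0 <= / t) by (left; apply Rinv_0_lt_compat, Ht).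
  replace m with (t ⋅ (/ t ⋅ m)) by (rewrite rscal_assoc, Rinv_r, rscal_1; [reflexivity | lra]).
  apply ler_scale; [lra|].
  apply le_meet.
  - rewrite <- (rscal_1 _ x), <- (Rinv_l t), <- rscal_assoc by lra.
    apply ler_scale; [exact Hinv | apply meet_le_l].
  - rewrite <- (rscal_1 _ y), <- (Rinv_l t), <- rscal_assoc by lra.
    apply ler_scale; [exact Hinv | apply meet_le_r].
Qed.

Lemma le0_of_le_disjoint_multiples u a b n k :
  a ⊓ b = rzero V -> rzero V ≼ a -> rzero V ≼ b ->
  u ≼ INR n ⋅ a -> u ≼ INR k ⋅ b -> u ≼ rzero V.
Proof.
  intros Hab Ha Hb Hn Hk.
  assert (Hn0 := pos_INR n). assert (Hk0 := pos_INR k).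
  set (N := INR n + INR k + 1).
  rewrite <- (scaler0 N), <- Hab.
  apply rle_trans with ((N ⋅ a) ⊓ (N ⋅ b)); [apply le_meet | apply scale_meet_ge; unfold N; lra].
  - eapply rle_trans; [exact Hn | apply ler_scale_l; [exact Ha | unfold N; lra]].
  - eapply rle_trans; [exact Hk | apply ler_scale_l; [exact Hb | unfold N; lra]].
Qed.

Lemma pow2_scale_le_of_doubling {T : Type} (f : T -> V) u :
  (forall i, f i ≼ u) -> (forall i, exists j, f j = f i ⊞ f i) ->
  forall k i, 2 ^ k ⋅ f i ≼ u.
Proof.
  intros Hle Hdouble k. induction k as [|k IH]; intro i.
  - rewrite pow_O, rscal_1. apply Hle.
  - destruct (Hdouble i) as [j Ej].
    rewrite <- tech_pow_Rmult, Rmult_comm, <- rscal_assoc, scaler_double, <- Ej. apply IH.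
Qed.

(* [n d = (n / 2^n) (2^n d) <= (n / 2^n) u <= u], since [n <= 2^n]. *)
Lemma archimedean_le0_of_pow2_le u d :
  archimedean V -> rzero V ≼ u -> (forall k, 2 ^ k ⋅ d ≼ u) -> d ≼ rzero V.
Proof.
  intros Harch Hu Hd. apply Harch with (b := u). intros n _.
  assert (Hpow : 0 < 2 ^ n) by (apply pow_lt; lra).
  assert (Hn : 1 + INR n * 1 <= (1 + 1) ^ n) by (apply poly; lra).
  assert (Hn0 := pos_INR n).
  set (t := INR n / 2 ^ n).
  assert (Et : INR n = t * 2 ^ n) by (unfold t; field; lra).
  assert (Ht : 0 <= t <= 1) by (replace (1 + 1) with 2 in Hn by lra; split; nra).
  rewrite Et, <- rscal_assoc. apply rle_trans with (t ⋅ u).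
  - apply ler_scale; [apply Ht | apply Hd].
  - rewrite <- (rscal_1 _ u) at 2. apply ler_scale_l; [exact Hu | lra].
Qed.

End RieszSpaceTheory.

Definition podot (M : PseudoMV) (x y : M) : M :=
  ptilde M (poplus M (pminus M x) (pminus M y)).

Section StateMorphism.

Context {M : PseudoMV} {V : RieszSpace} {u : V} {s : M -> V}.
Hypothesis Hs : state_morphism M V u s.

Lemma state_ge0 x : rzero V ≼ s x.
Proof. apply (proj1 Hs x). Qed.

Lemma state_le_unit x : s x ≼ u.
Proof. apply (proj1 Hs x). Qed.

Lemma state_oplus x y : s (poplus M x y) = (s x ⊞ s y) ⊓ u.
Proof. apply (proj1 (proj2 Hs)). Qed.

Lemma state_minus x : s (pminus M x) = u ⊞ ⊟ s x.
Proof. apply (proj1 (proj2 (proj2 Hs))). Qed.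

Lemma state_tilde x : s (ptilde M x) = u ⊞ ⊟ s x.
Proof. rewrite (proj1 (proj2 (proj2 (proj2 Hs)))). apply radd_comm. Qed.

Lemma state0 : s (pzero M) = rzero V.
Proof. apply Hs. Qed.

Lemma state1 : s (pone M) = u.
Proof. apply Hs. Qed.

Lemma unit_ge0 : rzero V ≼ u.
Proof. apply rle_trans with (s (pzero M)); [apply state_ge0 | apply state_le_unit]. Qed.

Lemma state_le_of_ple x y : ple M x y -> s x ≼ s y.
Proof.
  intro Hxy. apply (f_equal s) in Hxy.
  rewrite state_oplus, state_minus, state1 in Hxy.
  assert (Hu : u ≼ u ⊞ ⊟ s x ⊞ s y) by (rewrite <- Hxy at 1; apply meet_le_l).
  apply (lerD2r (u ⊞ ⊟ s x)).
  rewrite (radd_comm _ (s x)), addrNK, (radd_comm _ (s y)). exact Hu.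
Qed.

Lemma state_odot x y :
  s (podot M x y) = u ⊞ ⊟ (((u ⊞ ⊟ s x) ⊞ (u ⊞ ⊟ s y)) ⊓ u).
Proof. unfold podot. rewrite state_tilde, state_oplus, !state_minus. reflexivity. Qed.

Lemma state_odot_minus y z : s (podot M y (pminus M z)) = s y ⊞ ⊟ (s y ⊓ s z).
Proof.
  rewrite state_odot, state_minus, subKr.
  replace ((u ⊞ ⊟ s y ⊞ s z) ⊓ u) with ((s z ⊓ s y) ⊞ (u ⊞ ⊟ s y)).
  - rewrite subrDsubr, meetC. reflexivity.
  - rewrite <- meetDl, (radd_comm _ (s y)), addrNK, radd_comm. reflexivity.
Qed.

Lemma ker_odot_minus y z : Ker M V s (podot M y (pminus M z)) <-> s y ≼ s z.
Proof. unfold Ker. rewrite state_odot_minus. apply subr_meet_eq0. Qed.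

Lemma state_odot_self x : s (pminus M x) ≼ s x -> s (podot M x x) = (s x ⊞ s x) ⊞ ⊟ u.
Proof.
  rewrite state_minus. intro Hx. rewrite state_odot, meet_idPl.
  - rewrite subrDsubr, opprB, radd_assoc. reflexivity.
  - rewrite <- (addrNK u (s x)) at 3. apply lerD2l, Hx.
Qed.

Lemma state_oplus_self x : s x ≼ s (pminus M x) -> s (poplus M x x) = s x ⊞ s x.
Proof.
  rewrite state_minus. intro Hx. rewrite state_oplus, meet_idPl; [reflexivity|].
  rewrite <- (addrNK u (s x)). apply rle_add, Hx.
Qed.

Lemma multiples_ideal a : is_ideal M (fun x => exists n, s x ≼ INR n ⋅ a).
Proof.
  split; [|split].
  - exists (pzero M), 0%nat. rewrite state0, scale0r. apply rle_refl.
  - intros x y [n Hn] Hxy. exists n. eapply rle_trans; [apply state_le_of_ple, Hxy | exact Hn].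
  - intros x y [n Hn] [m Hm]. exists (n + m)%nat.
    rewrite state_oplus, plus_INR, rscal_distr_l.
    eapply rle_trans; [apply meet_le_l | apply lerD; assumption].
Qed.

Hypothesis Hmax : is_maximal_ideal M (Ker M V s).

Lemma maximal_ker_unit_bound y : s y <> rzero V -> exists n, u ≼ INR n ⋅ s y.
Proof.
  intro Hy. rewrite <- state1.
  apply NNPP. intro Hone. apply Hy.
  destruct Hmax as (_ & _ & Hmaximal).
  apply (Hmaximal _ (multiples_ideal (s y))).
  - exists (pone M). exact Hone.
  - intros x Hx. exists 0%nat. unfold Ker in Hx. rewrite Hx, scale0r. apply rle_refl.
  - exists 1%nat. rewrite rscal_1. apply rle_refl.
Qed.

Lemma maximal_ker_unit_neq0 : u <> rzero V.
Proof.
  intro Hu. destruct Hmax as (_ & [x Hx] & _). apply Hx.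
  apply rle_antisym; [rewrite <- Hu; apply state_le_unit | apply state_ge0].
Qed.

Lemma maximal_ker_total y z : s y ≼ s z \/ s z ≼ s y.
Proof.
  destruct (classic (s y ≼ s z)) as [Hyz | Hyz]; [left; exact Hyz|].
  destruct (classic (s z ≼ s y)) as [Hzy | Hzy]; [right; exact Hzy|].
  exfalso. apply maximal_ker_unit_neq0.
  destruct (maximal_ker_unit_bound (podot M y (pminus M z))) as [n Hn].
  { intro Hker. apply Hyz, ker_odot_minus, Hker. }
  destruct (maximal_ker_unit_bound (podot M z (pminus M y))) as [k Hk].
  { intro Hker. apply Hzy, ker_odot_minus, Hker. }
  rewrite state_odot_minus in Hn, Hk. rewrite (meetC (s z)) in Hk.
  apply rle_antisym; [|apply unit_ge0].
  apply (le0_of_le_disjoint_multiples _ _ _ n k (subr_meet_disjoint (s y) (s z)));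
    [apply subr_ge0, meet_le_l | apply subr_ge0, meet_le_r | exact Hn | exact Hk].
Qed.

End StateMorphism.

Section SameKernel.

Context {M : PseudoMV} {V : RieszSpace} {u : V} {s1 s2 : M -> V}.
Hypotheses (Hs1 : state_morphism M V u s1) (Hs2 : state_morphism M V u s2).
Hypothesis Hker : forall x, Ker M V s1 x <-> Ker M V s2 x.

Lemma same_ker_le y z : s1 y ≼ s1 z -> s2 y ≼ s2 z.
Proof.
  rewrite <- (ker_odot_minus Hs1), <- (ker_odot_minus Hs2). apply Hker.
Qed.

Lemma state_sub_le_unit x : s1 x ⊞ ⊟ s2 x ≼ u.
Proof.
  rewrite <- (radd_0 _ u). apply lerD.
  - apply (state_le_unit Hs1).
  - apply oppr_le0, (state_ge0 Hs2).
Qed.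

Hypothesis Htotal : forall y z, s1 y ≼ s1 z \/ s1 z ≼ s1 y.

Lemma state_sub_double x :
  exists x', s1 x' ⊞ ⊟ s2 x' = (s1 x ⊞ ⊟ s2 x) ⊞ (s1 x ⊞ ⊟ s2 x).
Proof.
  destruct (Htotal (pminus M x) x) as [Hhigh | Hlow].
  - exists (podot M x x).
    rewrite (state_odot_self Hs1 _ Hhigh).
    rewrite (state_odot_self Hs2 _ (same_ker_le _ _ Hhigh)).
    rewrite subrBB. apply subrDD.
  - exists (poplus M x x).
    rewrite (state_oplus_self Hs1 _ Hlow).
    rewrite (state_oplus_self Hs2 _ (same_ker_le _ _ Hlow)).
    apply subrDD.
Qed.

Lemma same_ker_state_le : archimedean V -> forall x, s1 x ≼ s2 x.
Proof.
  intros Harch x. apply subr_le0.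
  apply (archimedean_le0_of_pow2_le u); [exact Harch | apply (unit_ge0 Hs1) |].
  intro k. apply (pow2_scale_le_of_doubling (fun y => s1 y ⊞ ⊟ s2 y)).
  - apply state_sub_le_unit.
  - apply state_sub_double.
Qed.

End SameKernel.

Theorem theorem3p11 (V : RieszSpace) (u : V) (M : PseudoMV) (s1 s2 : M -> V) :
  strong_unit V u -> archimedean V ->
  state_morphism M V u s1 -> state_morphism M V u s2 ->
  is_maximal_ideal M (Ker M V s1) -> is_maximal_ideal M (Ker M V s2) ->
  (forall x, Ker M V s1 x <-> Ker M V s2 x) ->
  s1 = s2.
Proof.
  intros _ Harch Hs1 Hs2 Hmax1 Hmax2 Hker.
  assert (Hker' : forall x, Ker M V s2 x <-> Ker M V s1 x) by (intro x; symmetry; apply Hker).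
  apply functional_extensionality. intro x. apply rle_antisym.
  - exact (same_ker_state_le Hs1 Hs2 Hker (maximal_ker_total Hs1 Hmax1) Harch x).
  - exact (same_ker_state_le Hs2 Hs1 Hker' (maximal_ker_total Hs2 Hmax2) Harch x).
Qed.
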